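(* Let $G$ be a directed graph with $n$ nodes and $V_C\subseteq V(G)$ with $|V_C|=m$ such that the LTI network on $G$ with control nodes $V_C$ is strongly structurally controllable. Let $\mathcal{C}$ be a set of node-disjoint chains covering $V(G)$ with set of sources $V_C$ and $T$ a time function for $\mathcal{C}$ such that $G\in\mathcal{G}^{\mathcal{C},T}$. Then $E(\mathcal{G}^{\mathcal{C},T}_{\mathrm{perf}})\setminus E(G)$ is a critical additive edge-set of $G$, and $n^c_{\mathrm{add}}(G)=\frac12n(n+1)+\frac12m(2n-m-1)-|E(G)|$.
   Context: Graphs are directed, self-loops allowed; $V(G)=\{1,\ldots,n\}$; $G+E'$ has node set $V(G)$ and edge set $E(G)\cup E'$. $\mathcal{Q}(G)=\{A\in\mathbb{R}^{n\times n}:\text{for } i\neq j,\ A_{ij}\neq0\iff(j,i)\in E(G)\}$. For $V_C=\{j_1,\ldots,j_m\}$, $B=[e_{j_1},\ldots,e_{j_m}]$; the LTI network on $G$ with control nodes $V_C$ is strongly structurally controllable (SSC) if $(A,B)$ is controllable for all $A\in\mathcal{Q}(G)$. For an SSC network on $G$ with control nodes $V_C$, an additive edge-set is a set $E^*\subseteq (V(G)\times V(G))\setminus E(G)$ such that for every $E'\subseteq E^*$, the network on $G+E'$ with control nodes $V_C$ is SSC. The critical additive number $n^c_{\mathrm{add}}(G)$ is the maximum of $|E^*|$ over all additive edge-sets, and a critical additive edge-set is an additive edge-set of cardinality $n^c_{\mathrm{add}}(G)$. A chain is a directed path graph with source (start node) and sink (end node); for a non-sink $v$, $v+1$ is its out-neighbor.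 For node-disjoint chains $\mathcal{C}=\{C_1,\ldots,C_m\}$, $V=\bigcup_iV(C_i)$, $\gamma=|V|-m+1$, a time function is $T:V\to\{1,\ldots,\gamma\}$ with (1) $T(v)=1$ for every source; (2) distinct non-source nodes get distinct values; (3) $T(v)<T(v+1)$ for non-sink $v$. $T_{\max}(v)=\gamma$ for a sink $v$, else $T_{\max}(v)=T(v+1)-1$. $\mathcal{G}^{\mathcal{C},T}$ is the set of graphs $G$ with $V(G)=V$, $\bigcup_iE(C_i)\subseteq E(G)$, and $(u,v)\notin E(G)$ whenever $(u,v)\notin\bigcup_iE(C_i)$ and $T_{\max}(u)<T(v)$. $\mathcal{G}^{\mathcal{C},T}_{\mathrm{perf}}$ has node set $V$ and edge set $\bigcup_iE(C_i)\cup\{(u,v)\in V\times V: T_{\max}(u)\geq T(v)\}$. *)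

From mathcomp Require Import all_boot all_order all_algebra.
From mathcomp Require Import Rstruct.
From Stdlib Require Rdefinitions.
From mathcomp Require Import boolp.
Local Notation R := Rdefinitions.R.
Set Implicit Arguments. Unset Strict Implicit. Unset Printing Implicit Defensive.
Import Order.TTheory GRing.Theory Num.Theory.
Local Open Scope ring_scope.

(* A directed graph on node set {0,..,n-1} (= 'I_n) is given by its edge set
   E : {set 'I_n * 'I_n}; (u, v) \in E is the edge u -> v. Self-loops allowed. *)

Definition inQ (n : nat) (E : {set 'I_n * 'I_n}) (A : 'M[R]_n) : Prop :=
  forall i j : 'I_n, i != j -> (A i j != 0 <-> (j, i) \in E).

Definition inputB (n : nat) (VC : {set 'I_n}) : 'M[R]_(n, #|VC|) :=
  \matrix_(i < n, k < #|VC|) (i == enum_val k)%:R.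

Definition kalman (n m : nat) (A : 'M[R]_n) (B : 'M[R]_(n, m)) :=
  @mxrow R n (fun _ : 'I_n => m) n (fun k : 'I_n => A ^+ k *m B).

Definition controllable (n m : nat) (A : 'M[R]_n) (B : 'M[R]_(n, m)) : Prop :=
  \rank (kalman A B) = n.

Definition SSC (n : nat) (E : {set 'I_n * 'I_n}) (VC : {set 'I_n}) : Prop :=
  forall A : 'M[R]_n, inQ E A -> controllable A (inputB VC).

Definition additive (n : nat) (E : {set 'I_n * 'I_n}) (VC : {set 'I_n})
    (Es : {set 'I_n * 'I_n}) : bool :=
  [disjoint Es & E] &&
  [forall E' : {set 'I_n * 'I_n}, (E' \subset Es) ==> `[< SSC (E :|: E') VC >]].

Definition n_add (n : nat) (E : {set 'I_n * 'I_n}) (VC : {set 'I_n}) : nat :=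
  (\max_(Es : {set 'I_n * 'I_n} | additive E VC Es) #|Es|)%N.

Definition critical_additive (n : nat) (E : {set 'I_n * 'I_n}) (VC : {set 'I_n})
    (Es : {set 'I_n * 'I_n}) : Prop :=
  additive E VC Es /\ #|Es| = n_add E VC.

(* Chains: a collection of chains is a list of node lists, each list being the
   nodes of a chain in path order (source first, sink last). *)
Definition chain_edge (n : nat) (C : seq (seq 'I_n)) (u v : 'I_n) : bool :=
  has (fun c => (u, v) \in zip c (behead c)) C.

Definition chain_edges (n : nat) (C : seq (seq 'I_n)) : {set 'I_n * 'I_n} :=
  [set e | chain_edge C e.1 e.2].

Definition is_source (n : nat) (C : seq (seq 'I_n)) (x : 'I_n) : bool :=
  has (fun c => (c != [::]) && (head x c == x)) C.

Definition chain_cover (n : nat) (C : seq (seq 'I_n)) (VC : {set 'I_n}) : Prop :=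
  [/\ all (fun c => c != [::]) C,
      uniq (flatten C),
      (forall x : 'I_n, x \in flatten C) &
      (forall x : 'I_n, is_source C x = (x \in VC))].

Definition gamma (n : nat) (C : seq (seq 'I_n)) : nat := (n - size C + 1)%N.

Definition time_function (n : nat) (C : seq (seq 'I_n)) (T : 'I_n -> nat) : Prop :=
  [/\ (forall v, 1 <= T v <= gamma C)%N,
      (forall v, is_source C v -> T v = 1%N),
      (forall u v, ~~ is_source C u -> ~~ is_source C v -> u != v -> T u != T v) &
      (forall u v, chain_edge C u v -> T u < T v)%N].

Definition Tmax (n : nat) (C : seq (seq 'I_n)) (T : 'I_n -> nat) (v : 'I_n) : nat :=
  if [pick w | chain_edge C v w] is Some w then (T w - 1)%N else gamma C.

Definition in_GCT (n : nat) (C : seq (seq 'I_n)) (T : 'I_n -> nat)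
    (E : {set 'I_n * 'I_n}) : Prop :=
  chain_edges C \subset E /\
  (forall u v : 'I_n, ~~ chain_edge C u v -> (Tmax C T u < T v)%N -> (u, v) \notin E).

Definition perf_edges (n : nat) (C : seq (seq 'I_n)) (T : 'I_n -> nat) : {set 'I_n * 'I_n} :=
  chain_edges C :|: [set e | (T e.2 <= Tmax C T e.1)%N].

From mathcomp Require Import all_boot all_order all_algebra.
From mathcomp Require Import Rstruct.
From Stdlib Require Rdefinitions.
From mathcomp Require Import boolp zify.
Set Implicit Arguments. Unset Strict Implicit. Unset Printing Implicit Defensive.

(* Over the reals, SSC of (G, VC) amounts to VC being a zero forcing set of G:
   a fort W avoiding VC carries a pattern matrix whose left kernel contains the
   indicator of W, and conversely the coordinates vanishing on the whole left
   kernel of the Kalman matrix are closed under forcing.  Following a zero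
   forcing process one forced node at a time, each forcing node has no edge to
   the nodes forced after its target, so a zero forcing graph misses at least
   C(n - m, 2) of the n^2 possible edges.  The perfect graph of (C, T) is zero
   forcing (the earliest node of a set is forced by its chain predecessor), and
   (u, v) |-> (u + 1, v) injects its non-edges into the time-increasing pairs of
   non-sources, so it misses exactly C(n - m, 2) edges.  Every graph between G
   and the perfect graph is zero forcing, hence perf \ E(G) is additive of the
   largest possible size n^2 - C(n - m, 2) - |E(G)|, which rearranges to the
   closed form. *)

Section LinearAlgebra.
Import GRing.Theory Num.Theory.
Local Open Scope ring_scope.
Local Notation R := Rdefinitions.R.

Lemma Cayley_Hamilton_span (F : comNzRingType) (n : nat) (A : 'M[F]_n) :
  exists c : 'I_n -> F, A ^+ n = \sum_(i < n) c i *: A ^+ i.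
Proof.
case: n A => [|n] A; first by exists (fun _ => 0); apply/matrixP => -[].
have := Cayley_Hamilton A.
rewrite -[char_poly A]coefK poly_def size_char_poly big_ord_recr /=.
have := char_poly_monic A; rewrite monicE /lead_coef size_char_poly /= => /eqP ->.
rewrite scale1r rmorphD /= rmorphXn /= horner_mx_X linear_sum /=.
under eq_bigr do rewrite linearZ /= rmorphXn /= horner_mx_X.
move/eqP; rewrite addrC addr_eq0 => /eqP ->.
exists (fun i => - (char_poly A)`_i).
by rewrite -sumrN; apply: eq_bigr => i _; rewrite scaleNr.
Qed.

Section Controllability.
Variables (n m : nat) (A : 'M[R]_n) (B : 'M[R]_(n, m)).

Lemma kalman_eq0 (y : 'rV[R]_n) :
  y *m kalman A B = 0 <-> forall k : 'I_n, y *m (A ^+ k *m B) = 0.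
Proof.
rewrite /kalman mul_mxrow; split => [yK0 k | yAB0].
  by rewrite -(mxrowK (fun k : 'I_n => y *m (A ^+ k *m B)) k) yK0 submxrow0.
by rewrite (eq_mxrow (B_ := fun k : 'I_n => 0)) ?mxrow0.
Qed.

Lemma kalman_eq0_pow (y : 'rV[R]_n) :
  y *m kalman A B = 0 -> forall k, y *m (A ^+ k *m B) = 0.
Proof.
move/kalman_eq0 => yAB0 k; elim/ltn_ind: k => k IHk.
have [ltkn | lenk] := ltnP k n; first exact: (yAB0 (Ordinal ltkn)).
have [c cA] := Cayley_Hamilton_span A.
have -> : A ^+ k = \sum_(i < n) c i *: A ^+ (k - n + i).
  rewrite -{1}(subnK lenk) exprD cA mulr_sumr.
  by apply: eq_bigr => i _; rewrite exprD -mulmxE scalemxAr.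
rewrite mulmx_suml mulmx_sumr big1 // => i _.
rewrite -scalemxAl -scalemxAr IHk ?scaler0 //.
by have := ltn_ord i; lia.
Qed.

Lemma controllableP :
  controllable A B <-> (forall y : 'rV[R]_n, y *m kalman A B = 0 -> y = 0).
Proof.
split => [ctrl y yK0 | ker0]; last exact/eqP/inj_row_free.
have freeK : row_free (kalman A B) by rewrite /row_free ctrl.
by apply/eqP; rewrite -(mulmx_free_eq0 _ freeK) yK0.
Qed.

End Controllability.

Lemma inputB_row (n : nat) (VC : {set 'I_n}) (y : 'rV[R]_n) k :
  (y *m inputB VC) 0 k = y 0 (enum_val k).
Proof.
rewrite !mxE (bigD1 (enum_val k)) //= mxE eqxx mulr1 big1 ?addr0 // => i ik.
by rewrite mxE (negbTE ik) mulr0.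
Qed.

Definition out_nbrs (n : nat) (F : {set 'I_n * 'I_n}) (W : {set 'I_n}) (j : 'I_n) :
  {set 'I_n} := [set i in W | (j, i) \in F].

(* [VC] is a zero forcing set of [F]: no fort of [F] avoids [VC]. *)
Definition zero_forcing (n : nat) (F : {set 'I_n * 'I_n}) (VC : {set 'I_n}) : Prop :=
  forall W : {set 'I_n}, W != set0 -> [disjoint W & VC] ->
    exists2 j, j \notin W & #|out_nbrs F W j| = 1%N.

Lemma zero_forcing_SSC (n : nat) (F : {set 'I_n * 'I_n}) (VC : {set 'I_n}) :
  zero_forcing F VC -> SSC F VC.
Proof.
move=> zfF A AinQ; apply/controllableP => y0 y0K.
pose K (y : 'rV[R]_n) := y *m kalman A (inputB VC) = 0.
have KB y : K y -> y *m inputB VC = 0.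
  by move/kalman_eq0_pow/(_ 0%N); rewrite expr0 mul1mx.
have KA y : K y -> K (y *m A).
  move=> Ky; apply/kalman_eq0 => k.
  by rewrite -mulmxA (mulmxA A) mulmxE -exprS kalman_eq0_pow.
pose Z := [set i | `[< forall y, K y -> y 0 i = 0 >]].
suff Zall : forall i, i \in Z.
  by apply/rowP => i; rewrite mxE; move: (Zall i); rewrite inE => /asboolP; apply.
have [W0 | W0] := eqVneq (~: Z) set0.
  by move=> i; apply/negPn; rewrite -in_setC W0 inE.
have WVC : [disjoint ~: Z & VC].
  rewrite disjoints_subset setCS; apply/subsetP => v vVC; rewrite inE.
  apply/asboolP => y /KB /rowP /(_ (enum_rank_in vVC v)).
  by rewrite inputB_row enum_rankK_in // mxE.
have [j jZ /eqP/cards1P [i0 outj]] := zfF _ W0 WVC.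
have /setIdP [i0Z ji0F] : i0 \in out_nbrs F (~: Z) j by rewrite outj set11.
have {}jZ : j \in Z by rewrite inE negbK in jZ.
have out_i0 i : i \notin Z -> i != j -> A i j != 0 -> i = i0.
  move=> iZ ij /(AinQ _ _ ij) jiF; apply/set1P.
  by rewrite -outj inE in_setC iZ.
have i0j : i0 != j by apply: contraTneq i0Z => ->; rewrite inE negbK.
exfalso; move: i0Z; rewrite in_setC => /negP; apply; rewrite inE.
apply/asboolP => y Ky; apply/eqP.
have : (y *m A) 0 j = 0 by move: jZ; rewrite inE => /asboolP; apply; exact: KA.
rewrite mxE (bigD1 i0) //= big1 ?addr0 => [/eqP|k k_i0].
  rewrite mulf_eq0 => /orP [//|].
  by rewrite (negPf ((AinQ _ _ i0j).2 ji0F)).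
have [kZ | kZ] := boolP (k \in Z); first by move: kZ; rewrite inE => /asboolP ->; rewrite ?mul0r.
have kj : k != j by apply: contraNneq kZ => ->.
have [/(out_i0 _ kZ kj) ki0|] := boolP (A k j != 0); first by rewrite ki0 eqxx in k_i0.
by rewrite negbK => /eqP ->; rewrite mulr0.
Qed.

Section FortMatrix.
Variables (n : nat) (F : {set 'I_n * 'I_n}) (W : {set 'I_n}).

(* Column [j] of the weights sums to zero over [W]: for [j] outside [W] the
   [k >= 2] out-neighbours of [j] in [W] get weights [1 - k, 1, ..., 1], which
   needs [k != 1] to stay nonzero; the diagonal balances the columns in [W]. *)
Definition fort_weight (i j : 'I_n) : R :=
  if (j, i) \in F then
    if (j \notin W) && ([pick x in out_nbrs F W j] == Some i)
    then 1 - #|out_nbrs F W j|%:R else 1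
  else 0.

Definition fort_matrix : 'M[R]_n :=
  \matrix_(i, j) if i == j then - \sum_(k in W | k != j) fort_weight k j
                 else fort_weight i j.

Lemma fort_matrix_inQ :
  (forall j, j \notin W -> #|out_nbrs F W j| != 1%N) -> inQ F fort_matrix.
Proof.
move=> fortW i j ij; rewrite mxE (negPf ij) /fort_weight.
case: ifP => jiF; last by split => // /eqP.
split=> // _; case: ifP => [/andP [jW _] | _]; last exact: oner_neq0.
by rewrite subr_eq0 -[1]/(1%:R) eqr_nat eq_sym fortW.
Qed.

Lemma fort_matrix_null : \row_i (i \in W)%:R *m fort_matrix = 0.
Proof.
apply/rowP => j; rewrite !mxE (bigID (mem W)) /= [X in _ + X]big1 ?addr0;
  last by move=> i /negPf iW; rewrite mxE iW mul0r.
under eq_bigr => i iW do rewrite mxE iW mul1r.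
have [jW | jW] := boolP (j \in W).
  rewrite (bigD1 j) //= mxE eqxx.
  under eq_bigr => i /andP [_ ij] do rewrite mxE (negPf ij).
  by rewrite addNr.
rewrite (eq_bigr (fun i => fort_weight i j)); last first.
  by move=> i iW; rewrite mxE; case: eqP iW jW => // ->->.
case pick_j: [pick x in out_nbrs F W j] => [i0|]; last first.
  rewrite big1 // => i iW; rewrite /fort_weight; case: ifP => // jiF.
  by move: pick_j; case: pickP => // /(_ i); rewrite inE iW jiF.
have /setIdP [i0W ji0F] : i0 \in out_nbrs F W j.
  by move: pick_j; case: pickP => // x + [<-].
rewrite (bigD1 i0) //= {1}/fort_weight ji0F jW pick_j eqxx /=.
have -> : \sum_(i in W | i != i0) fort_weight i j = \sum_(i in out_nbrs F W j :\ i0) 1.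
  rewrite big_mkcond [RHS]big_mkcond; apply: eq_bigr => i _.
  rewrite /fort_weight !inE pick_j jW; case: (i \in W); case: (eqVneq i i0) => [->|ii0] //=.
  by case: ((j, i) \in F) => //=; case: eqP => // -[ii0']; rewrite ii0' eqxx in ii0.
rewrite sumr_const (cardsD1 i0 (out_nbrs F W j)) inE i0W ji0F natrD.
by rewrite opprD addrA subrr add0r addNr.
Qed.

End FortMatrix.

Lemma SSC_zero_forcing (n : nat) (F : {set 'I_n * 'I_n}) (VC : {set 'I_n}) :
  SSC F VC -> zero_forcing F VC.
Proof.
move=> sscF W W0 WVC.
have [/existsP [j /andP [jW /eqP out1]] | /existsPn fortW] :=
  boolP [exists j, (j \notin W) && (#|out_nbrs F W j| == 1%N)]; first by exists j.
have {}fortW j : j \notin W -> #|out_nbrs F W j| != 1%N.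
  by move=> jW; have := fortW j; rewrite jW.
pose A := fort_matrix F W; pose y : 'rV[R]_n := \row_i (i \in W)%:R.
have yA : y *m A = 0 := fort_matrix_null F W.
have yB : y *m inputB VC = 0.
  apply/rowP => k; rewrite inputB_row !mxE.
  have [kW|//] := boolP (enum_val k \in W).
  by have := enum_valP k; rewrite (disjointFr WVC kW).
have yK : y *m kalman A (inputB VC) = 0.
  apply/kalman_eq0 => -[[|k] ?] /=; first by rewrite expr0 mul1mx.
  by rewrite exprS -mulmxE !mulmxA yA !mul0mx.
case/set0Pn: W0 => w wW.
have /rowP /(_ w) := (controllableP _ _).1 (sscF A (fort_matrix_inQ fortW)) y yK.
by rewrite !mxE wW => /eqP; rewrite oner_eq0.
Qed.

End LinearAlgebra.

Definition missing_edges (n : nat) (F : {set 'I_n * 'I_n}) (D : {set 'I_n}) :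
  {set 'I_n * 'I_n} :=
  [set p | [&& p \notin F, p.2 \notin D & [exists i, (i \notin D) && ((p.1, i) \in F)]]].

Lemma missing_edgesS (n : nat) (F : {set 'I_n * 'I_n}) (D D' : {set 'I_n}) :
  D \subset D' -> missing_edges F D' \subset missing_edges F D.
Proof.
move=> DD'; apply/subsetP => p; rewrite inE => /and3P [pF pD' /existsP [i /andP [iD' p1iF]]].
have notinD x : x \notin D' -> x \notin D by apply: contra; apply: (subsetP DD').
by rewrite inE pF notinD //=; apply/existsP; exists i; rewrite notinD.
Qed.

(* If [j] forces [v], then [j] has no edge to the other nodes outside [D], and
   these non-edges leave [missing_edges] once [v] is added to [D]. *)
Lemma card_missing_edges (n : nat) (F : {set 'I_n * 'I_n}) (VC D : {set 'I_n}) :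
  zero_forcing F VC -> VC \subset D -> 'C(#|~: D|, 2) <= #|missing_edges F D|.
Proof.
move=> zfF; move cardD: #|~: D| => k.
elim: k D cardD => [|k IHk] D cardD VCD; first by rewrite bin0n.
have D0 : ~: D != set0 by rewrite -card_gt0 cardD.
have DVC : [disjoint ~: D & VC] by rewrite disjoints_subset setCS.
have [j _ /eqP/cards1P [v out_j]] := zfF _ D0 DVC.
have /setIdP [vD jvF] : v \in out_nbrs F (~: D) j by rewrite out_j set11.
have out_jP w : w \notin D -> (j, w) \in F -> w = v.
  by move=> wD jwF; apply/set1P; rewrite -out_j inE in_setC wD.
have cardDv : #|~: (v |: D)| = k.
  by have := cardsD1 v (~: D); rewrite setCU setIC -setDE vD cardD => -[].
pose N := [set (j, w) | w in ~: (v |: D)].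
have cardN : #|N| = k by rewrite card_imset ?cardDv // => w w' [].
have IH := IHk _ cardDv (subset_trans VCD (subsetUr _ _)).
have N_missing : N \subset missing_edges F D.
  apply/subsetP => p /imsetP [w]; rewrite !inE negb_or => /andP [wv wD] ->.
  rewrite /= wD /=; apply/andP; split; first by apply: contra wv => /(out_jP _ wD) ->.
  by apply/existsP; exists v; rewrite -in_setC vD jvF.
have sub : missing_edges F (v |: D) :|: N \subset missing_edges F D.
  by rewrite subUset N_missing missing_edgesS ?subsetUr.
have disj : [disjoint missing_edges F (v |: D) & N].
  apply/pred0P => p; apply/negbTE; rewrite /= !inE.
  apply/negP => /andP [/and3P [_ _ /existsP [i /andP [iD p1iF]]] pN].
  case/imsetP: pN p1iF iD => w _ -> /= /[swap].
  rewrite !inE negb_or => /andP [iv iD] /(out_jP _ iD) ivE.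
  by rewrite ivE eqxx in iv.
have := subset_leq_card sub; rewrite cardsU (disjoint_setI0 disj) cards0 subn0 cardN.
by rewrite binS bin1; apply: leq_trans; rewrite leq_add2r.
Qed.

Lemma zero_forcing_card_edges (n : nat) (F : {set 'I_n * 'I_n}) (VC : {set 'I_n}) :
  zero_forcing F VC -> #|F| + 'C(n - #|VC|, 2) <= n * n.
Proof.
move=> zfF.
have missingF : missing_edges F VC \subset ~: F.
  by apply/subsetP => p; rewrite !inE => /andP [].
have := leq_trans (card_missing_edges zfF (subxx VC)) (subset_leq_card missingF).
have -> : n - #|VC| = #|~: VC| by have := cardsC VC; rewrite card_ord; lia.
have := cardsC F; rewrite card_prod card_ord; lia.
Qed.

Lemma mem_zip_pair (S T : eqType) (s : seq S) (t : seq T) a b :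
  (a, b) \in zip s t -> (a \in s) && (b \in t).
Proof.
elim: s t => [|x s IHs] [|y t] //=; rewrite !in_cons => /orP [/eqP [-> ->] | /IHs].
  by rewrite !eqxx.
by case/andP => -> ->; rewrite !orbT.
Qed.

Lemma zip_behead_inj (T : eqType) (c : seq T) u w u' w' : uniq c ->
  (u, w) \in zip c (behead c) -> (u', w') \in zip c (behead c) -> (u == u') = (w == w').
Proof.
elim: c => [|x [|y s] IHc] //= /andP [x_ys ys_uniq].
have [y_s _] := andP ys_uniq.
have fresh a b : (a, b) \in zip (y :: s) s -> (x == a) = false /\ (y == b) = false.
  case/mem_zip_pair/andP => ays bs; split; apply/negbTE.
    by apply: contra x_ys => /eqP ->.
  by apply: contra y_s => /eqP ->.
rewrite !in_cons => /orP [/eqP [-> ->] | uw] /orP [/eqP [-> ->] | uw'].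
- by rewrite !eqxx.
- by have [-> ->] := fresh _ _ uw'.
- by have [xu yw] := fresh _ _ uw; rewrite eq_sym xu eq_sym yw.
- exact: IHc.
Qed.

Lemma zip_behead_pred (T : eqType) (h : T) s x : x \in s ->
  exists u, (u, x) \in zip (h :: s) s.
Proof.
elim: s h => [|y s IHs] h //; rewrite in_cons => /orP [/eqP -> | /(IHs y) [u ux]].
  by exists h; rewrite in_cons eqxx.
by exists u; rewrite in_cons ux orbT.
Qed.

Lemma chain_edge_mem (n : nat) (C : seq (seq 'I_n)) u w :
  chain_edge C u w -> (u \in flatten C) && (w \in flatten C).
Proof.
elim: C => [|c C IHC] //; rewrite /chain_edge /= !mem_cat => /orP [uw | /IHC /andP [-> ->]].
  by have /andP [-> /mem_behead ->] := mem_zip_pair uw.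
by rewrite !orbT.
Qed.

Lemma chain_edge_inj (n : nat) (C : seq (seq 'I_n)) u w u' w' : uniq (flatten C) ->
  chain_edge C u w -> chain_edge C u' w' -> (u == u') = (w == w').
Proof.
elim: C => [|c C IHC] //=; rewrite cat_uniq => /and3P [c_uniq cC C_uniq].
have apart a b : a \in c -> b \in flatten C -> (a == b) = false.
  move=> ac bC; apply/negbTE; apply: contraNneq cC => eab.
  by apply/hasP; exists b => //; rewrite -eab.
have in_c a b : (a, b) \in zip c (behead c) -> (a \in c) && (b \in c).
  by case/mem_zip_pair/andP => -> /mem_behead ->.
rewrite /chain_edge /= => /orP [uw | uw] /orP [u'w' | u'w'].
- exact: zip_behead_inj c_uniq uw u'w'.
- have [/andP [uc wc] /andP [u'C w'C]] := conj (in_c _ _ uw) (chain_edge_mem u'w').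
  by rewrite (apart _ _ uc u'C) (apart _ _ wc w'C).
- have [/andP [u'c w'c] /andP [uC wC]] := conj (in_c _ _ u'w') (chain_edge_mem uw).
  by rewrite eq_sym (apart _ _ u'c uC) eq_sym (apart _ _ w'c wC).
- exact: IHC.
Qed.

Lemma chain_edge_pred (n : nat) (C : seq (seq 'I_n)) x :
  x \in flatten C -> ~~ is_source C x -> exists u, chain_edge C u x.
Proof.
elim: C => [|c C IHC] //=; rewrite mem_cat /is_source /= negb_or.
case/orP => [xc | xC] /andP [x_head x_src]; last first.
  by have [u ux] := IHC xC x_src; exists u; apply/orP; right.
case: c xc x_head => [|h s] //; rewrite in_cons /= => /orP [/eqP -> | xs].
  by rewrite eqxx.
by have [u ux] := zip_behead_pred h xs; exists u; apply/orP; left.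
Qed.

Lemma Tmax_chain_edge (n : nat) (C : seq (seq 'I_n)) (T : 'I_n -> nat) u w :
  uniq (flatten C) -> chain_edge C u w -> Tmax C T u = T w - 1.
Proof.
move=> C_uniq uw; rewrite /Tmax; case: pickP => [w' uw' | /(_ w)]; last by rewrite uw.
by have := chain_edge_inj C_uniq uw uw'; rewrite eqxx => /esym/eqP ->.
Qed.

Lemma card_increasing_pairs (T : finType) (X : {set T}) (f : T -> nat) :
  #|[set q in setX X X | f q.1 < f q.2]| <= 'C(#|X|, 2).
Proof.
set P := [set q in _ | _]; rewrite -cards_draws.
have P_inj : {in P &, injective (fun q => [set q.1; q.2])}.
  move=> [a b] [a' b']; rewrite !inE /= => /andP [_ ab] /andP [_ ab'] eqab.
  have aE : a \in [set a'; b'] by rewrite -eqab set21.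
  have bE : b \in [set a'; b'] by rewrite -eqab set22.
  by move: ab ab'; case/set2P: aE => ->; case/set2P: bE => -> // ab ab'; lia.
rewrite -(card_in_imset P_inj); apply/subset_leq_card/subsetP => A /imsetP [[a b]].
rewrite !inE /= => /andP [/andP [aX bX] ab] ->.
rewrite subUset !sub1set aX bX cards2 eqSS eqb1.
by apply: contraTneq ab => ->; rewrite ltnn.
Qed.

Lemma mul_bin2 (x : nat) : 2 * 'C(x, 2) = x * x.-1.
Proof. by rewrite -mul_bin_diag bin1. Qed.

Lemma bin2D (m k : nat) : 'C(m + k, 2) = 'C(m, 2) + 'C(k, 2) + m * k.
Proof.
elim: k => [|k IHk]; first by rewrite addn0 muln0 bin0n !addn0.
by rewrite addnS !binS !bin1 IHk mulnS; lia.
Qed.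

Lemma square_sub_bin2 (n m : nat) : m <= n ->
  n * n - 'C(n - m, 2) = (n * n.+1) %/ 2 + (m * (2 * n - m - 1)) %/ 2.
Proof.
move=> le_mn; have [k -> {le_mn}] : exists k, n = m + k.
  by exists (n - m); rewrite subnKC.
have -> : (m + k) * (m + k).+1 = 2 * 'C((m + k).+1, 2) by rewrite mul_bin2 mulnC.
have -> : m * (2 * (m + k) - m - 1) = 2 * ('C(m, 2) + m * k).
  case: m => [|m]; first by rewrite !mul0n.
  rewrite (_ : 2 * _ - _ - 1 = m + 2 * k); last by lia.
  by rewrite [RHS]mulnDr mul_bin2 [in RHS]mulnCA -mulnDr.
have sqr_mk : (m + k) * (m + k) = 2 * 'C(m + k, 2) + (m + k).
  by rewrite mul_bin2 -mulnSr; case: (m + k).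
by rewrite addKn !mulKn // binS bin1 sqr_mk bin2D; lia.
Qed.

Section ChainCover.
Variables (n : nat) (C : seq (seq 'I_n)) (VC : {set 'I_n}) (T : 'I_n -> nat).
Hypotheses (coverC : chain_cover C VC) (timeT : time_function C T).

(* The node of [W] with the least time is forced by its predecessor on its chain. *)
Lemma chain_zero_forcing (F : {set 'I_n * 'I_n}) :
  chain_edges C \subset F -> F \subset perf_edges C T -> zero_forcing F VC.
Proof.
move=> CF Fperf W W0 WVC.
have [_ C_uniq C_all C_src] := coverC; have [T_range _ _ T_edge] := timeT.
have [w0 w0W] := set0Pn _ W0; have [v vW v_min] := arg_minnP T w0W.
have [u uv] : exists u, chain_edge C u v.
  by apply: chain_edge_pred (C_all v) _; rewrite C_src (disjointFr WVC vW).
exists u; first by apply/negP => /v_min; rewrite leqNgt T_edge.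
apply/eqP/cards1P; exists v; apply/setP => i; rewrite !inE.
apply/andP/eqP => [[iW /(subsetP Fperf)] | ->]; last first.
  by split=> //; apply: (subsetP CF); rewrite inE.
rewrite !inE /= => /orP [ui | Ti_le].
  by have := chain_edge_inj C_uniq uv ui; rewrite eqxx => /esym/eqP.
rewrite (Tmax_chain_edge T C_uniq uv) in Ti_le.
by have := v_min _ iW; have := T_range v; lia.
Qed.

(* [(u, w) |-> (u + 1, w)] maps the non-edges of the perfect graph injectively
   to pairs of non-sources with increasing times. *)
Lemma card_perf_compl : #|~: perf_edges C T| <= 'C(#|~: VC|, 2).
Proof.
have [_ C_uniq _ C_src] := coverC; have [T_range T_src T_inj T_edge] := timeT.
pose succ u := odflt u [pick w | chain_edge C u w].
have nonedge p : p \notin perf_edges C T ->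
    [/\ chain_edge C p.1 (succ p.1), ~~ chain_edge C p.1 p.2 & T (succ p.1) <= T p.2].
  rewrite !inE negb_or -ltnNge /Tmax /succ => /andP [p12].
  case: pickP => [w p1w /= | _ gamma_lt]; first by split=> //; lia.
  by have := T_range p.2; lia.
have late_nsrc x : 1 < T x -> x \notin VC.
  by rewrite -C_src; apply: contraTN => /T_src ->.
have img : [set (succ p.1, p.2) | p in ~: perf_edges C T] \subset
           [set q in setX (~: VC) (~: VC) | T q.1 < T q.2].
  apply/subsetP => q /imsetP [p]; rewrite inE => /nonedge [p1s p12 le_sp] ->.
  have := T_edge _ _ p1s; have := T_range p.1 => T_p1 lt_p1s.
  have [s_nsrc p2_nsrc] : succ p.1 \notin VC /\ p.2 \notin VC.
    by split; apply: late_nsrc; lia.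
  rewrite !inE /= s_nsrc p2_nsrc ltn_neqAle le_sp /= andbT.
  apply: T_inj; rewrite ?C_src //; apply: contraNneq p12 => <-; exact: p1s.
have inj : {in ~: perf_edges C T &, injective (fun p => (succ p.1, p.2))}.
  move=> [a b] [a' b']; rewrite !in_setC.
  move=> /nonedge [/= a_s _ _] /nonedge [/= a's _ _] [eq_s ->]; rewrite -eq_s in a's.
  by have := chain_edge_inj C_uniq a_s a's; rewrite eqxx => /eqP ->.
rewrite -(card_in_imset inj); apply: leq_trans (subset_leq_card img) _.
exact: card_increasing_pairs.
Qed.

Lemma card_perf_edges : #|perf_edges C T| = n * n - 'C(n - #|VC|, 2).
Proof.
have zf_perf : zero_forcing (perf_edges C T) VC.
  exact: chain_zero_forcing (subsetUl _ _) (subxx _).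
have := zero_forcing_card_edges zf_perf.
have -> : n - #|VC| = #|~: VC| by have := cardsC VC; rewrite card_ord; lia.
have := card_perf_compl; have := cardsC (perf_edges C T); rewrite card_prod card_ord.
lia.
Qed.

End ChainCover.

Lemma in_GCT_subset_perf (n : nat) (C : seq (seq 'I_n)) (T : 'I_n -> nat)
    (E : {set 'I_n * 'I_n}) :
  in_GCT C T E -> E \subset perf_edges C T.
Proof.
case=> _ GCT; apply/subsetP => -[u v] uvE; rewrite !inE /=.
by case: (boolP (chain_edge C u v)) => //= uv; rewrite leqNgt (contraL (GCT _ _ uv) uvE).
Qed.

Lemma perf_additive (n : nat) (C : seq (seq 'I_n)) (VC : {set 'I_n}) (T : 'I_n -> nat)
    (E : {set 'I_n * 'I_n}) :
  chain_cover C VC -> time_function C T -> in_GCT C T E ->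
  additive E VC (perf_edges C T :\: E).
Proof.
move=> coverC timeT GCT; have [CE _] := GCT.
rewrite /additive disjoints_subset subsetDr; apply/forallP => E'; apply/implyP => E'Es.
apply/asboolP/zero_forcing_SSC/(chain_zero_forcing coverC timeT).
  exact: subset_trans CE (subsetUl _ _).
by rewrite subUset in_GCT_subset_perf // (subset_trans E'Es (subsetDl _ _)).
Qed.

Lemma additive_card (n : nat) (E : {set 'I_n * 'I_n}) (VC : {set 'I_n}) Es :
  additive E VC Es -> #|E| + #|Es| + 'C(n - #|VC|, 2) <= n * n.
Proof.
case/andP; rewrite disjoint_sym => EEs /forallP /(_ Es).
rewrite subxx => /asboolP /SSC_zero_forcing /zero_forcing_card_edges.
by rewrite cardsU (disjoint_setI0 EEs) cards0 subn0.
Qed.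

Lemma n_add_max (n : nat) (E : {set 'I_n * 'I_n}) (VC : {set 'I_n}) Es :
  additive E VC Es -> (forall Es', additive E VC Es' -> #|Es'| <= #|Es|) ->
  n_add E VC = #|Es|.
Proof.
move=> addEs maxEs; apply/eqP; rewrite eqn_leq (leq_bigmax_cond _ addEs) andbT.
exact/bigmax_leqP.
Qed.

Theorem theorem6 (n : nat) (E : {set 'I_n * 'I_n}) (VC : {set 'I_n})
    (C : seq (seq 'I_n)) (T : 'I_n -> nat) :
  SSC E VC ->
  chain_cover C VC ->
  time_function C T ->
  in_GCT C T E ->
  critical_additive E VC (perf_edges C T :\: E) /\
  n_add E VC = ((n * n.+1) %/ 2 + (#|VC| * (2 * n - #|VC| - 1)) %/ 2 - #|E|)%N.
Proof.
(* SSC of [E] itself follows from the chain structure (see [perf_additive]). *)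
move=> _ coverC timeT GCT.
have card_Es : #|perf_edges C T :\: E| = n * n - 'C(n - #|VC|, 2) - #|E|.
  by rewrite cardsD (setIidPr (in_GCT_subset_perf GCT)) (card_perf_edges coverC timeT).
have addEs := perf_additive coverC timeT GCT.
have n_addE : n_add E VC = #|perf_edges C T :\: E|.
  by apply: n_add_max addEs _ => Es /additive_card; rewrite card_Es; lia.
split; first by split; rewrite ?n_addE.
by rewrite n_addE card_Es square_sub_bin2 //; have := max_card VC; rewrite card_ord.
Qed.
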